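(* Let $p_{Y|X}p_X$ define a finite IB problem. The IB curve has a linear segment at $\beta=1$, i.e., there is a nondegenerate interval of $I_X$-values on which the IB curve $I_Y(I_X)$ is affine with slope $1/\beta=1$, if and only if the joint distribution $p_{Y|X}p_X$ decomposes.
   Context: $\mathcal{X},\mathcal{Y}$ are finite sets and $p(x,y)=p(y|x)p(x)$ is a joint distribution with $p(x)>0$. The IB curve is $I_Y(I_X):=\max\{I(Y;\hat X): I(X;\hat X)\le I_X\}$, the maximum taken over all random variables $\hat X$ on finite alphabets forming a Markov chain $Y\leftrightarrow X\leftrightarrow\hat X$ (i.e., over encoders $p(\hat x|x)$). A matrix decomposes if, after permuting its rows and columns, it can be written non-trivially as a block (diagonal) matrix with at least two blocks; here the matrix is the $|\mathcal{X}|\times|\mathcal{Y}|$ matrix $(p(y|x)p(x))_{x,y}$. *)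

From HB Require Import structures.
From mathcomp Require Import all_boot all_order all_algebra.
From mathcomp Require Import all_classical all_reals all_analysis.
Set Implicit Arguments. Unset Strict Implicit. Unset Printing Implicit Defensive.
Import Order.TTheory GRing.Theory Num.Theory.
Local Open Scope ring_scope.
Local Open Scope classical_set_scope.

Definition mutinf (R : realType) (A B : finType) (r : A -> B -> R) : R :=
  let rA a := \sum_(b : B) r a b in
  let rB b := \sum_(a : A) r a b in
  \sum_(a : A) \sum_(b : B)
     (if r a b == 0 then 0 else r a b * ln (r a b / (rA a * rB b))).

(* p x y = p(y|x) p(x): the joint distribution of (X,Y). *)
Definition pX (R : realType) (X Y : finType) (p : X -> Y -> R) (x : X) : R :=
  \sum_(y : Y) p x y.

Definition encoder (R : realType) (X T : finType) (q : X -> T -> R) : Prop :=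
  (forall x t, 0 <= q x t) /\ (forall x, \sum_(t : T) q x t = 1).

Definition IXT (R : realType) (X Y T : finType) (p : X -> Y -> R)
  (q : X -> T -> R) : R := mutinf (fun x t => pX p x * q x t).

(* I(Y;Xhat) under the Markov chain Y <-> X <-> Xhat:
   joint p(y,xhat) = sum_x p(x,y) q(xhat|x). *)
Definition IYT (R : realType) (X Y T : finType) (p : X -> Y -> R)
  (q : X -> T -> R) : R := mutinf (fun y t => \sum_(x : X) p x y * q x t).

Definition IB_values (R : realType) (X Y : finType) (p : X -> Y -> R) (IX : R)
  : set R :=
  [set iy | exists (T : finType) (q : X -> T -> R),
      encoder q /\ IXT p q <= IX /\ iy = IYT p q].

(* The IB curve I_Y(I_X) (the max is attained; we write it as the sup). *)
Definition IB_curve (R : realType) (X Y : finType) (p : X -> Y -> R) (IX : R)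
  : R := sup (IB_values p IX).

Definition linear_segment_beta1 (R : realType) (X Y : finType)
  (p : X -> Y -> R) : Prop :=
  exists a b : R, 0 <= a /\ a < b /\
    forall ix, a <= ix <= b -> IB_curve p ix = IB_curve p a + (ix - a).

(* The |X| x |Y| matrix (p x y) decomposes: after permuting rows and columns
   it is block diagonal with k >= 2 (nonempty) blocks; row x goes to block f x,
   column y to block g y, and entries outside the diagonal blocks vanish. *)
Definition decomposes (R : realType) (X Y : finType) (p : X -> Y -> R) : Prop :=
  exists (k : nat) (f : X -> 'I_k) (g : Y -> 'I_k),
    (2 <= k)%N /\
    (forall i : 'I_k, exists x, f x = i) /\
    (forall i : 'I_k, exists y, g y = i) /\
    (forall x y, p x y != 0 -> f x = g y).

From HB Require Import structures.
From mathcomp Require Import all_boot all_order all_algebra.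
From mathcomp Require Import all_classical all_reals all_analysis.
From mathcomp Require Import ring lra.
Import Order.TTheory GRing.Theory Num.Theory.
Local Open Scope ring_scope.

(* Mixing an encoder with an erasure (output a fresh symbol with probability
   1 - l) multiplies both I(X;T) and I(Y;T) by l, so I_Y(I_X) / I_X is
   nonincreasing, and data processing gives I_Y(I_X) <= I_X.

   If p decomposes, the block index f(X) is also a function of Y, so
   I(Y; f X) = I(X; f X) > 0 and the erasures of f(X) keep the curve on the
   diagonal over [0, I(X; f X)].

   If p does not decompose, the bipartite graph x ~ y (p x y <> 0) is
   connected, which yields a Poincare inequality for the Dirichlet form
   sum p(x,y) (u x - v y)^2.  For each output letter t, the loss
   I(X;T=t) - I(Y;T=t) dominates a Hellinger distance (ln z <= z - 1), while
   I(X;T=t) is at most a chi-square divergence, which this Dirichlet form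
   controls.  Hence I(Y;T) <= eta I(X;T) for some eta < 1.  A slope-1 segment
   on [a, b] would, by the monotone ratio, force I_Y(a) >= a and thus
   I_Y(b) = b > eta b. *)

Section InformationBottleneck.
Local Set Implicit Arguments.
Local Unset Strict Implicit.
Variable R : realType.

Lemma sumr_option (T : finType) (F : option T -> R) :
  \sum_(o : option T) F o = F None + \sum_(t : T) F (Some t).
Proof.
rewrite (bigD1 None) //=; congr (_ + _).
rewrite (reindex_omap Some id) //=; last by case.
by apply: eq_bigl => t; rewrite eqxx.
Qed.

Lemma ler_sum_term (I : finType) (F : I -> R) i :
  (forall j, 0 <= F j) -> F i <= \sum_j F j.
Proof. by move=> F0; rewrite (bigD1 i) //= lerDl sumr_ge0. Qed.

Lemma ln_le_subr1 (x : R) : 0 < x -> ln x <= x - 1.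
Proof. by move=> x0; have := @le_ln1Dx R (x - 1); rewrite [1 + _]addrC subrK; apply; lra. Qed.

Lemma subr_le_mul_ln (u w : R) : 0 < u -> 0 < w -> u - w <= u * ln (u / w).
Proof.
move=> u0 w0; have := ln_le_subr1 (divr_gt0 w0 u0).
rewrite -[u / w]invf_div lnV ?posrE ?divr_gt0 // => h.
have := ler_wpM2l (ltW u0) h; rewrite mulrBr mulr1 mulrCA divff ?gt_eqF //.
lra.
Qed.

(* With [a = sqrt c] and [b = sqrt r]: one term of a chi-square divergence
   against one term of the Hellinger distance to the mean. *)
Lemma chi2_term_le (w a b : R) : 0 <= w <= 1 -> 0 <= a -> 0 < b ->
  w * a ^+ 2 <= b ^+ 2 -> w * (a ^+ 2 - b ^+ 2) ^+ 2 / b ^+ 2 <= 4 * (a - b) ^+ 2.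
Proof.
move=> /andP[w0 w1] a0 b0 wab.
have -> : w * (a ^+ 2 - b ^+ 2) ^+ 2 / b ^+ 2 = (a - b) ^+ 2 * (w * (a + b) ^+ 2 / b ^+ 2).
  by field; rewrite gt_eqF.
rewrite mulrC ler_wpM2r ?sqr_ge0 // ler_pdivrMr ?exprn_gt0 //.
have := sqr_ge0 (a - b); nra.
Qed.

Lemma sum_sqr_subr_rms_le (I : finType) (w a : I -> R) :
  (forall i, 0 <= w i) -> \sum_i w i = 1 -> (forall i, 0 <= a i) ->
  \sum_i w i * (a i - Num.sqrt (\sum_j w j * a j ^+ 2)) ^+ 2
    <= \sum_i \sum_j w i * w j * (a i - a j) ^+ 2.
Proof.
move=> w0 w1 a0.
set b := Num.sqrt _; set m := \sum_i w i * a i.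
have b2 : b ^+ 2 = \sum_j w j * a j ^+ 2.
  by rewrite sqr_sqrtr // sumr_ge0 // => j _; rewrite mulr_ge0 ?sqr_ge0.
have b0 : 0 <= b := sqrtr_ge0 _.
have m0 : 0 <= m by rewrite sumr_ge0 // => i _; rewrite mulr_ge0.
have -> : \sum_i w i * (a i - b) ^+ 2 = 2 * b ^+ 2 - 2 * b * m.
  under eq_bigr do rewrite sqrrB !mulrDr mulrN.
  rewrite big_split sumrB /= -mulr_suml w1 -b2.
  rewrite (eq_bigr (fun i => 2 * b * (w i * a i))); last by move=> i _; ring.
  rewrite -mulr_sumr -/m; ring.
have pair0 : 0 <= \sum_i \sum_j w i * w j * (a i - a j) ^+ 2.
  by apply: sumr_ge0 => i _; apply: sumr_ge0 => j _; rewrite mulr_ge0 ?sqr_ge0 ?mulr_ge0.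
have eD : \sum_i \sum_j w i * w j * (a i - a j) ^+ 2 = 2 * b ^+ 2 - 2 * m ^+ 2.
  rewrite (eq_bigr (fun i => w i * a i ^+ 2 - 2 * (w i * a i) * m + w i * b ^+ 2)); last first.
    move=> i _; rewrite (eq_bigr (fun j => w i * a i ^+ 2 * w j - 2 * (w i * a i) * (w j * a j)
                                        + w i * (w j * a j ^+ 2))); last by move=> j _; ring.
    by rewrite big_split sumrB /= -!mulr_sumr w1 -b2 -/m; ring.
  rewrite big_split sumrB /= -!mulr_suml w1 -b2 -mulr_sumr -/m; ring.
have mb : m <= b by rewrite -ler_sqr ?nnegrE //; lra.
rewrite eD in pair0 *; nra.
Qed.

Lemma kl_le_chi2 (I : finType) (w q : I -> R) :
  (forall i, 0 <= w i) -> \sum_i w i = 1 -> (forall i, 0 <= q i) ->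
  0 < \sum_i w i * q i ->
  \sum_i (if q i == 0 then 0 else w i * q i * ln (q i / \sum_j w j * q j))
    <= \sum_i w i * (q i - \sum_j w j * q j) ^+ 2 / \sum_j w j * q j.
Proof.
move=> w0 w1 q0; set r := \sum_j w j * q j => r0.
apply: (@le_trans _ _ (\sum_i w i * q i * (q i / r - 1))).
  apply: ler_sum => i _; case: eqP => [->|/eqP qi0]; first by rewrite mulr0 mul0r.
  by rewrite ler_wpM2l ?mulr_ge0 // ln_le_subr1 // divr_gt0 // lt_def qi0 q0.
rewrite le_eqVlt -subr_eq0 -sumrB; apply/orP; left.
rewrite (eq_bigr (fun i => w i * q i - w i * r)); last by move=> i _; field; rewrite gt_eqF.
by rewrite sumrB -mulr_suml w1 mul1r subrr.
Qed.

(* The joint law of (A, B') where B' is B erased to [None] with probability [1 - l]. *)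
Definition erase (A B : finType) (l : R) (r : A -> B -> R) (a : A) (o : option B) : R :=
  if o is Some b then l * r a b else (1 - l) * \sum_b r a b.

Lemma mutinf_erase (A B : finType) (r : A -> B -> R) (l : R) :
  \sum_a \sum_b r a b = 1 -> mutinf (erase l r) = l * mutinf r.
Proof.
move=> r1; rewrite /mutinf /= mulr_sumr; apply: eq_bigr => a _.
have rA : \sum_(o : option B) erase l r a o = \sum_b r a b.
  by rewrite sumr_option /= -mulr_sumr; ring.
have rNone : \sum_a erase l r a None = 1 - l by rewrite /= -mulr_sumr r1 mulr1.
have rSome b : \sum_a erase l r a (Some b) = l * \sum_a r a b by rewrite /= mulr_sumr.
rewrite sumr_option rA rNone /=; set ra := \sum_b r a b.
rewrite [X in X + _](_ : _ = 0) ?add0r; last first.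
  case: eqP => // /eqP; rewrite mulf_eq0 negb_or => /andP[l1 ra0].
  by rewrite [ra * _]mulrC divff ?mulf_neq0 // ln1 mulr0.
rewrite mulr_sumr; apply: eq_bigr => b _; rewrite rSome.
have [->|l0] := eqVneq l 0; first by rewrite !mul0r eqxx.
rewrite mulf_eq0 (negbTE l0) /=; case: eqP => _; first by rewrite mulr0.
rewrite -mulrA; congr (_ * (_ * ln _)).
by rewrite mulrCA invfM mulrACA mulfV // mul1r.
Qed.

Section Channel.
Variables (X Y : finType) (p : X -> Y -> R).
Hypothesis p_ge0 : forall x y, 0 <= p x y.
Hypothesis pX_sum1 : \sum_x pX p x = 1.
Hypothesis pX_gt0 : forall x, 0 < pX p x.

Definition pY (y : Y) : R := \sum_x p x y.

(* For the column [c = q(t|.)] of an encoder, [out_mass c] is P(T = t),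
   [out_joint c y] is P(Y = y, T = t), and [infoX c], [infoY c] are the
   contributions of the output letter t to I(X;T) and I(Y;T). *)
Definition out_mass (c : X -> R) : R := \sum_x pX p x * c x.

Definition out_joint (c : X -> R) (y : Y) : R := \sum_x p x y * c x.

Definition infoX (c : X -> R) : R :=
  \sum_x (if c x == 0 then 0 else pX p x * c x * ln (c x / out_mass c)).

Definition infoY (c : X -> R) : R :=
  \sum_y (if out_joint c y == 0 then 0
          else out_joint c y * ln (out_joint c y / (pY y * out_mass c))).

Definition dirichlet (u : X -> R) (v : Y -> R) : R :=
  \sum_x \sum_y p x y * (u x - v y) ^+ 2.

Definition hellinger (c : X -> R) : R :=
  dirichlet (fun x => Num.sqrt (c x)) (fun y => Num.sqrt (out_joint c y / pY y)).

Lemma pX_neq0 x : pX p x != 0.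
Proof. by rewrite gt_eqF. Qed.

Lemma pX_le1 x : pX p x <= 1.
Proof. by rewrite -pX_sum1 (ler_sum_term (F := pX p)) // => z; rewrite ltW. Qed.

Lemma letter_masses_gt0 (c : X -> R) x y :
  (forall x, 0 <= c x) -> p x y * c x != 0 ->
  [/\ 0 < p x y, 0 < c x, 0 < out_mass c, 0 < out_joint c y & 0 < pY y].
Proof.
move=> c0; rewrite mulf_eq0 negb_or => /andP[pxy cx].
have pxy0 : 0 < p x y by rewrite lt_def pxy p_ge0.
have cx0 : 0 < c x by rewrite lt_def cx c0.
split => //.
- apply: lt_le_trans (mulr_gt0 (pX_gt0 x) cx0) _.
  by apply: (ler_sum_term (F := fun z => pX p z * c z)) => z; rewrite mulr_ge0 // ltW.
- apply: lt_le_trans (mulr_gt0 pxy0 cx0) _.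
  by apply: (ler_sum_term (F := fun z => p z y * c z)) => z; rewrite mulr_ge0.
- exact: lt_le_trans pxy0 (ler_sum_term (F := fun z => p z y) _ _).
Qed.

Lemma IXT_sum_infoX (T : finType) (q : X -> T -> R) : encoder q ->
  IXT p q = \sum_t infoX (fun x => q x t).
Proof.
move=> [_ q1]; rewrite /IXT /mutinf /= exchange_big; apply: eq_bigr => t _.
apply: eq_bigr => x _; rewrite -mulr_sumr q1 mulr1 mulf_eq0 (negbTE (pX_neq0 x)) /=.
case: eqP => // _; congr (_ * ln _).
by rewrite invfM mulrACA mulfV ?pX_neq0 // mul1r.
Qed.

Lemma IYT_sum_infoY (T : finType) (q : X -> T -> R) : encoder q ->
  IYT p q = \sum_t infoY (fun x => q x t).
Proof.
move=> [_ q1]; rewrite /IYT /mutinf /= exchange_big; apply: eq_bigr => t _.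
apply: eq_bigr => y _.
have -> : \sum_t' \sum_x p x y * q x t' = pY y.
  by rewrite exchange_big; apply: eq_bigr => x _; rewrite -mulr_sumr q1 mulr1.
suff -> : \sum_y' \sum_x p x y' * q x t = out_mass (fun x => q x t) by [].
by rewrite exchange_big; apply: eq_bigr => x _; rewrite -mulr_suml.
Qed.

Lemma infoX_sum2 (c : X -> R) : infoX c =
  \sum_x \sum_y (if p x y * c x == 0 then 0 else p x y * c x * ln (c x / out_mass c)).
Proof.
rewrite /infoX; apply: eq_bigr => x _; have [->|cx0] := eqVneq (c x) 0.
  by apply/esym/big1 => y _; rewrite mulr0 eqxx.
rewrite /pX !mulr_suml; apply: eq_bigr => y _.
by rewrite mulf_eq0 (negbTE cx0) orbF; case: eqP => // ->; rewrite !mul0r.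
Qed.

Lemma infoY_sum2 (c : X -> R) : (forall x, 0 <= c x) -> infoY c =
  \sum_x \sum_y (if p x y * c x == 0 then 0
                 else p x y * c x * ln (out_joint c y / (pY y * out_mass c))).
Proof.
move=> c0; rewrite exchange_big; apply: eq_bigr => y _.
have [s0|_] := eqVneq (out_joint c y) 0.
  apply/esym/big1 => x _.
  by rewrite (psumr_eq0P (F := fun z => p z y * c z) _ s0) ?eqxx // => z _; rewrite mulr_ge0.
rewrite /out_joint mulr_suml; apply: eq_bigr => x _.
by case: eqP => // ->; rewrite mul0r.
Qed.

Lemma infoX_subr_infoY (c : X -> R) : (forall x, 0 <= c x) ->
  infoX c - infoY c =
  \sum_x \sum_y (if p x y * c x == 0 then 0
                 else p x y * c x * ln (c x * pY y / out_joint c y)).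
Proof.
move=> c0; rewrite infoX_sum2 infoY_sum2 // -sumrB; apply: eq_bigr => x _.
rewrite -sumrB; apply: eq_bigr => y _.
case: eqP => [_|/eqP pc0]; first by rewrite subrr.
have [pxy cx r s y0] := letter_masses_gt0 c0 pc0.
rewrite -mulrBr -ln_div ?posrE ?divr_gt0 ?mulr_gt0 //; congr (_ * ln _).
by field; rewrite !gt_eqF.
Qed.

Lemma hellinger_sum2 (c : X -> R) : (forall x, 0 <= c x) -> hellinger c =
  \sum_x \sum_y (2 * p x y * c x
                 - 2 * p x y * Num.sqrt (c x) * Num.sqrt (out_joint c y / pY y)).
Proof.
move=> c0; set w := fun y => Num.sqrt (out_joint c y / pY y).
have split_term x y : p x y * (Num.sqrt (c x) - w y) ^+ 2 =
    (2 * p x y * c x - 2 * p x y * Num.sqrt (c x) * w y) + (p x y * w y ^+ 2 - p x y * c x).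
  by rewrite sqrrB (sqr_sqrtr (c0 x)); ring.
rewrite /hellinger /dirichlet; under eq_bigr do under eq_bigr do rewrite split_term.
under eq_bigr do rewrite big_split /=.
rewrite big_split /= -[RHS]addr0; congr (_ + _).
(* summing over x turns [p x y * w y ^+ 2] into [out_joint c y] *)
rewrite exchange_big big1 // => y _.
rewrite sumrB -mulr_suml -/(pY y) -/(out_joint c y).
have [y0|yn0] := eqVneq (pY y) 0.
  have py0 x : p x y = 0 by apply: (psumr_eq0P _ y0) => // z _.
  by rewrite y0 mul0r /out_joint big1 ?subrr // => x _; rewrite py0 mul0r.
have y_gt0 : 0 < pY y by rewrite lt_def yn0 sumr_ge0.
have s0 : 0 <= out_joint c y by apply: sumr_ge0 => x _; rewrite mulr_ge0.
by rewrite /w sqr_sqrtr ?divr_ge0 ?(ltW y_gt0) // mulrC divfK // subrr.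
Qed.

Lemma dirichlet_ge0 u v : 0 <= dirichlet u v.
Proof. by apply: sumr_ge0 => x _; apply: sumr_ge0 => y _; rewrite mulr_ge0 ?sqr_ge0. Qed.

Lemma hellinger_le_info_gap (c : X -> R) : (forall x, 0 <= c x) ->
  hellinger c <= infoX c - infoY c.
Proof.
move=> c0; rewrite hellinger_sum2 // infoX_subr_infoY //.
apply: ler_sum => x _; apply: ler_sum => y _.
case: eqP => [/eqP|/eqP pc0].
  by rewrite mulf_eq0 => /orP[] /eqP->; rewrite ?sqrtr0 !(mulr0, mul0r) subrr.
have [pxy cx _ s y0] := letter_masses_gt0 c0 pc0.
set u := Num.sqrt (c x); set w := Num.sqrt (out_joint c y / pY y).
have u0 : 0 < u by rewrite sqrtr_gt0.
have w0 : 0 < w by rewrite sqrtr_gt0 divr_gt0.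
have cu : c x = u ^+ 2 by rewrite sqr_sqrtr ?ltW.
have -> : c x * pY y / out_joint c y = (u / w) ^+ 2.
  by rewrite expr_div_n -cu sqr_sqrtr ?divr_ge0 ?ltW //; field; rewrite !gt_eqF.
have key := subr_le_mul_ln u0 w0.
have pu0 : 0 <= p x y * u by rewrite mulr_ge0 ?ltW.
rewrite lnXn ?divr_gt0 // cu -mulr_natl; nra.
Qed.

Lemma IYT_le_IXT (T : finType) (q : X -> T -> R) : encoder q -> IYT p q <= IXT p q.
Proof.
move=> e; rewrite IXT_sum_infoX // IYT_sum_infoY //; apply: ler_sum => t _.
rewrite -subr_ge0; apply: le_trans (hellinger_le_info_gap (fun x => e.1 x t)).
exact: dirichlet_ge0.
Qed.

Lemma sqr_subr_le_dirichlet u v x y : p x y != 0 ->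
  (u x - v y) ^+ 2 <= (p x y)^-1 * dirichlet u v.
Proof.
move=> pxy; have pxy0 : 0 < p x y by rewrite lt_def pxy p_ge0.
rewrite -(ler_pM2l pxy0) mulVKf //.
apply: le_trans (ler_sum_term (F := fun y' => p x y' * (u x - v y') ^+ 2) y _) _.
  by move=> y'; rewrite mulr_ge0 ?sqr_ge0.
apply: (ler_sum_term (F := fun x' => \sum_y' p x' y' * (u x' - v y') ^+ 2)) => x'.
by apply: sumr_ge0 => y' _; rewrite mulr_ge0 ?sqr_ge0.
Qed.

Definition dirichlet_bounds (x z : X) : Prop :=
  exists c : R, 0 <= c /\ forall u v, (u x - u z) ^+ 2 <= c * dirichlet u v.

Lemma dirichlet_bounds_refl x : dirichlet_bounds x x.
Proof. by exists 0; split => // u v; rewrite subrr expr0n mul0r. Qed.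

Lemma dirichlet_bounds_step x a b y : dirichlet_bounds x a ->
  p a y != 0 -> p b y != 0 -> dirichlet_bounds x b.
Proof.
move=> [c [c0 hc]] pay pby.
exists (3 * c + 3 * (p a y)^-1 + 3 * (p b y)^-1); split.
  by rewrite !addr_ge0 ?mulr_ge0 ?invr_ge0.
move=> u v; have h1 := hc u v.
have h2 := sqr_subr_le_dirichlet u v pay; have h3 := sqr_subr_le_dirichlet u v pby.
have : (u x - u b) ^+ 2 <= 3 * ((u x - u a) ^+ 2 + (u a - v y) ^+ 2 + (u b - v y) ^+ 2).
  set d1 := u x - u a; set d2 := u a - v y; set d3 := u b - v y.
  have -> : u x - u b = d1 + d2 - d3 by rewrite /d1 /d2 /d3; ring.
  have := sqr_ge0 (d1 - d2); have := sqr_ge0 (d1 + d3); have := sqr_ge0 (d2 + d3).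
  nra.
move/le_trans; apply; rewrite !mulrDl -!mulrA; lra.
Qed.

Lemma decomposes_of_cut (S : X -> Prop) x0 x1 : S x0 -> ~ S x1 ->
  (forall a b y, S a -> p a y != 0 -> p b y != 0 -> S b) -> decomposes p.
Proof.
move=> Sx0 Sx1 closedS.
have out_edge z : exists y, p z y != 0.
  apply: contrapT => /forallNP nz; move: (pX_neq0 z); rewrite /pX big1 ?eqxx // => y _.
  by move: (nz y); case: eqP.
have I2 (i : 'I_2) : i = ord0 \/ i = ord_max.
  by case: i => -[|[|//]] ?; [left|right]; apply: val_inj.
pose f z : 'I_2 := if pselect (S z) then ord0 else ord_max.
pose g y : 'I_2 := if pselect (exists z, S z /\ p z y != 0) then ord0 else ord_max.
exists 2%N, f, g; split => //; split; [|split].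
- by move=> i; case: (I2 i) => ->; [exists x0 | exists x1]; rewrite /f; case: pselect.
- move=> i; case: (I2 i) => ->.
    have [y hy] := out_edge x0; exists y; rewrite /g; case: pselect => // -[].
    by exists x0.
  have [y hy] := out_edge x1; exists y; rewrite /g; case: pselect => // -[z [Sz hz]].
  by case: Sx1; apply: closedS Sz hz hy.
- move=> z y hzy; rewrite /f /g; case: pselect => Sz; case: pselect => // hy.
    by case: hy; exists z.
  by case: hy => z' [Sz' hz']; case: Sz; apply: closedS Sz' hz' hzy.
Qed.

Lemma dirichlet_bounds_connected : ~ decomposes p -> forall x z, dirichlet_bounds x z.
Proof.
move=> nd x z; apply: contrapT => nxz; apply: nd.
exact: (decomposes_of_cut (dirichlet_bounds_refl x) nxz (@dirichlet_bounds_step x)).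
Qed.

Lemma infoX_le_hellinger : ~ decomposes p ->
  exists K, 0 <= K /\ forall c, (forall x, 0 <= c x) -> infoX c <= K * hellinger c.
Proof.
move=> nd.
have [C hC] := choice (fun xz : X * X => dirichlet_bounds_connected nd xz.1 xz.2).
set K0 := \sum_x 4 / pX p x; set K1 := \sum_x \sum_z pX p x * pX p z * C (x, z).
have K0_ge0 : 0 <= K0 by apply: sumr_ge0 => x _; rewrite divr_ge0 ?ltW.
have K1_ge0 : 0 <= K1.
  apply: sumr_ge0 => x _; apply: sumr_ge0 => z _.
  by rewrite mulr_ge0 ?(hC (x, z)).1 // mulr_ge0 // ltW.
exists (K0 * K1); split => [|c c0]; first exact: mulr_ge0.
have r_ge0 : 0 <= out_mass c by apply: sumr_ge0 => x _; rewrite mulr_ge0 // ltW.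
have [r0|rn0] := eqVneq (out_mass c) 0.
  rewrite [infoX c]big1 ?mulr_ge0 ?dirichlet_ge0 // => x _.
  have /eqP : pX p x * c x = 0 by apply: (psumr_eq0P _ r0) => // z _; rewrite mulr_ge0 // ltW.
  by rewrite mulf_eq0 (negbTE (pX_neq0 x)) /= => ->.
have r_gt0 : 0 < out_mass c by rewrite lt_def rn0 r_ge0.
set r := out_mass c; pose a x := Num.sqrt (c x); set b := Num.sqrt r.
have b_gt0 : 0 < b by rewrite sqrtr_gt0.
have chi2 : infoX c <= \sum_x pX p x * (c x - r) ^+ 2 / r.
  by apply: kl_le_chi2 => // x; rewrite ltW.
have rms : \sum_x pX p x * (c x - r) ^+ 2 / r <= K0 * \sum_x pX p x * (a x - b) ^+ 2.
  rewrite mulr_sumr; apply: ler_sum => x _.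
  have -> : pX p x * (c x - r) ^+ 2 / r = pX p x * (a x ^+ 2 - b ^+ 2) ^+ 2 / b ^+ 2.
    by rewrite /a /b !sqr_sqrtr // ltW.
  apply: le_trans (chi2_term_le _ _ b_gt0 _) _.
  - by rewrite ltW //= pX_le1.
  - exact: sqrtr_ge0.
  - rewrite /a /b !sqr_sqrtr ?(ltW r_gt0) //.
    by apply: (ler_sum_term (F := fun z => pX p z * c z)) => z; rewrite mulr_ge0 // ltW.
  rewrite [K0 * _]mulrA; apply: ler_wpM2r; first exact: sqr_ge0.
  rewrite -ler_pdivrMr //; apply: (ler_sum_term (F := fun z => 4 / pX p z)) => z.
  by rewrite divr_ge0 // ltW.
have pairs : \sum_x pX p x * (a x - b) ^+ 2
             <= \sum_x \sum_z pX p x * pX p z * (a x - a z) ^+ 2.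
  have -> : b = Num.sqrt (\sum_z pX p z * a z ^+ 2).
    by congr Num.sqrt; apply: eq_bigr => z _; rewrite sqr_sqrtr.
  by apply: sum_sqr_subr_rms_le => // x; [exact: ltW | exact: sqrtr_ge0].
have poincare : \sum_x \sum_z pX p x * pX p z * (a x - a z) ^+ 2 <= K1 * hellinger c.
  rewrite mulr_suml; apply: ler_sum => x _; rewrite mulr_suml; apply: ler_sum => z _.
  rewrite -[_ * hellinger c]mulrA; apply: ler_wpM2l; first by rewrite mulr_ge0 // ltW.
  exact: (hC (x, z)).2.
apply: le_trans chi2 (le_trans rms _); rewrite -mulrA ler_wpM2l //.
exact: le_trans pairs poincare.
Qed.

Lemma strong_dpi : ~ decomposes p -> exists eta : R, 0 <= eta /\ eta < 1 /\
  forall (T : finType) (q : X -> T -> R), encoder q -> IYT p q <= eta * IXT p q.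
Proof.
move=> nd; have [K [K_ge0 hK]] := infoX_le_hellinger nd.
have K1_gt0 : 0 < K + 1 by lra.
exists (1 - (K + 1)^-1); split; last split.
- by rewrite subr_ge0 invf_le1 //; lra.
- by rewrite ltrBlDl ltrDr invr_gt0.
move=> T q e.
have gap : IXT p q <= (K + 1) * (IXT p q - IYT p q).
  have : IXT p q <= K * (IXT p q - IYT p q).
    rewrite IXT_sum_infoX // IYT_sum_infoY // -sumrB mulr_sumr; apply: ler_sum => t _.
    have c0 x : 0 <= q x t := e.1 x t.
    by apply: le_trans (hK _ c0) _; rewrite ler_wpM2l // hellinger_le_info_gap.
  have := IYT_le_IXT e; nra.
by rewrite mulrBl mul1r lerBrDr -lerBrDl mulrC ler_pdivrMr // mulrC.
Qed.

Definition erasure (T : finType) (l : R) (q : X -> T -> R) (x : X) (o : option T) : R :=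
  if o is Some t then l * q x t else 1 - l.

Lemma erasure_encoder (T : finType) (l : R) (q : X -> T -> R) :
  encoder q -> 0 <= l <= 1 -> encoder (erasure l q).
Proof.
move=> [q0 q1] /andP[l0 l1]; split; first by move=> x [t|] /=; [rewrite mulr_ge0 | lra].
by move=> x; rewrite sumr_option /= -mulr_sumr q1; ring.
Qed.

Lemma IXT_erasure (T : finType) (l : R) (q : X -> T -> R) :
  encoder q -> IXT p (erasure l q) = l * IXT p q.
Proof.
move=> [_ q1]; rewrite /IXT -mutinf_erase.
  congr mutinf; apply: funext => x; apply: funext => -[t|] /=; first by rewrite mulrCA.
  by rewrite -mulr_sumr q1 mulr1 mulrC.
by rewrite -pX_sum1; apply: eq_bigr => x _; rewrite -mulr_sumr q1 mulr1.
Qed.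

Lemma IYT_erasure (T : finType) (l : R) (q : X -> T -> R) :
  encoder q -> IYT p (erasure l q) = l * IYT p q.
Proof.
move=> [_ q1]; rewrite /IYT -mutinf_erase.
  congr mutinf; apply: funext => y; apply: funext => -[t|] /=.
    by rewrite mulr_sumr; apply: eq_bigr => x _; rewrite mulrCA.
  rewrite exchange_big mulr_sumr; apply: eq_bigr => x _.
  by rewrite -mulr_sumr q1 mulr1 mulrC.
rewrite (eq_bigr pY) => [|y _]; first by rewrite exchange_big.
by rewrite exchange_big; apply: eq_bigr => x _; rewrite -mulr_sumr q1 mulr1.
Qed.

Lemma IB_values0 ix : 0 <= ix -> IB_values p ix 0.
Proof.
have unit_enc : encoder (fun (_ : X) (_ : unit) => 1 : R).
  by split => // x; rewrite big_const card_unit /= addr0.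
move=> ix0; exists (option unit), (erasure 0 (fun _ _ => 1)).
split; first by apply: erasure_encoder; rewrite // lexx ler01.
by rewrite IXT_erasure ?IYT_erasure // !mul0r.
Qed.

Lemma IB_values_le ix iy : IB_values p ix iy -> iy <= ix.
Proof. by move=> [T [q [e [le_ix ->]]]]; exact: le_trans (IYT_le_IXT e) le_ix. Qed.

Lemma has_sup_IB_values ix : 0 <= ix -> has_sup (IB_values p ix).
Proof.
by move=> ix0; split; [exists 0; exact: IB_values0 | exists ix => iy /IB_values_le].
Qed.

Lemma IB_curve_le ix : 0 <= ix -> IB_curve p ix <= ix.
Proof.
by move=> ix0; apply: ge_sup => [|iy /IB_values_le //]; exists 0; exact: IB_values0.
Qed.

Lemma IB_curve_ge ix iy : 0 <= ix -> IB_values p ix iy -> iy <= IB_curve p ix.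
Proof. by move=> ix0; apply: sup_upper_bound; exact: has_sup_IB_values. Qed.

(* Erasures turn an encoder achieving [(b, iy)] into one achieving [(a, (a/b) iy)]. *)
Lemma IB_curve_ratio_le a b : 0 <= a -> a < b -> a * IB_curve p b <= b * IB_curve p a.
Proof.
move=> a0 ab; have b0 : 0 < b := le_lt_trans a0 ab.
have [->|an0] := eqVneq a 0.
  by rewrite mul0r mulr_ge0 ?(ltW b0) //; apply: IB_curve_ge (IB_values0 _).
have a_gt0 : 0 < a by rewrite lt_def an0 a0.
suff le_ratio : IB_curve p b <= b / a * IB_curve p a.
  by have := ler_wpM2l a0 le_ratio; rewrite mulrA [a * (b / a)]mulrC divfK.
apply: ge_sup; first by exists 0; exact: IB_values0 (ltW b0).
move=> _ [T [q [e [le_b ->]]]].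
have l01 : 0 <= a / b <= 1 by rewrite divr_ge0 ?(ltW b0) //= ler_pdivrMr // mul1r ltW.
have : IB_values p a (a / b * IYT p q).
  exists (option T), (erasure (a / b) q); rewrite IXT_erasure ?IYT_erasure //.
  split; first exact: erasure_encoder.
  by split=> //; rewrite mulrAC ler_pdivrMr // ler_pM2l.
move/(IB_curve_ge a0)/(ler_wpM2l (ltW (divr_gt0 b0 a_gt0))).
suff -> : b / a * (a / b * IYT p q) = IYT p q by [].
by field; rewrite !gt_eqF.
Qed.

Definition block_encoder (k : nat) (f : X -> 'I_k) (x : X) (t : 'I_k) : R := (f x == t)%:R.

Lemma block_encoderP (k : nat) (f : X -> 'I_k) : encoder (block_encoder f).
Proof.
split=> [x t|x]; first exact: ler0n.
rewrite (bigD1 (f x)) //= /block_encoder eqxx big1 ?addr0 // => t.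
by rewrite eq_sym => /negbTE ->.
Qed.

Lemma IYT_block (k : nat) (f : X -> 'I_k) (g : Y -> 'I_k) :
  (forall x y, p x y != 0 -> f x = g y) ->
  IYT p (block_encoder f) = IXT p (block_encoder f).
Proof.
move=> fg; have e := block_encoderP f; rewrite IXT_sum_infoX // IYT_sum_infoY //.
apply: eq_bigr => t _; apply/esym/eqP; rewrite -subr_eq0 infoX_subr_infoY; last first.
  by move=> x; exact: ler0n.
apply/eqP/big1 => x _; apply: big1 => y _; case: eqP => // /eqP pc.
have [pxy cx _ _ y_gt0] := letter_masses_gt0 (fun x => ler0n _ _) pc.
have fxt : f x = t by apply/eqP; move: cx; rewrite /block_encoder ltr0n lt0b.
(* every x' linked to y lies in the block of x, so T = t is read off Y = y *)
have -> : out_joint (block_encoder f ^~ t) y = pY y.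
  apply: eq_bigr => x' _; have [->|/fg fx'y] := eqVneq (p x' y) 0; first by rewrite mul0r.
  by rewrite /block_encoder fx'y -(fg _ _ (lt0r_neq0 pxy)) fxt eqxx mulr1.
by rewrite /block_encoder fxt eqxx mul1r divff ?ln1 ?mulr0 // lt0r_neq0.
Qed.

Lemma IXT_block (k : nat) (f : X -> 'I_k) :
  IXT p (block_encoder f) = \sum_x pX p x * ln (\sum_(z | f z == f x) pX p z)^-1.
Proof.
have rho t : out_mass (block_encoder f ^~ t) = \sum_(z | f z == t) pX p z.
  rewrite big_mkcond; apply: eq_bigr => z _.
  by rewrite /block_encoder; case: eqP; rewrite ?mulr1 ?mulr0.
rewrite IXT_sum_infoX ?/infoX; last exact: block_encoderP.
rewrite exchange_big; apply: eq_bigr => x _.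
rewrite (bigD1 (f x)) //= big1 => [|t].
  by rewrite /block_encoder eqxx oner_eq0 mulr1 rho div1r addr0.
by rewrite eq_sym /block_encoder => /negbTE ->; rewrite eqxx.
Qed.

Lemma IXT_block_gt0 (k : nat) (f : X -> 'I_k) : (2 <= k)%N ->
  (forall i, exists x, f x = i) -> 0 < IXT p (block_encoder f).
Proof.
move=> k2 fsurj; rewrite IXT_block.
have [x0 fx0] := fsurj (Ordinal (ltnW k2)); have [x1 fx1] := fsurj (Ordinal k2).
have f10 : f x1 != f x0 by rewrite fx0 fx1.
pose rho x := \sum_(z | f z == f x) pX p z.
have pX_ge0 z : 0 <= pX p z := ltW (pX_gt0 z).
have rho_gt0 x : 0 < rho x by rewrite /rho (bigD1 x) //= ltr_pwDl ?sumr_ge0.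
have rho_le1 x : rho x <= 1.
  by rewrite -pX_sum1 [leRHS](bigID (fun z => f z == f x)) /= lerDl sumr_ge0.
have rho_lt1 : rho x0 < 1.
  rewrite -pX_sum1 (bigID (fun z => f z == f x0)) /= ltrDl (bigD1 x1) //=.
  by rewrite ltr_pwDl ?sumr_ge0.
rewrite (bigD1 x0) //= ltr_pwDl ?sumr_ge0 // => [|x _].
  by rewrite mulr_gt0 // ln_gt0 // (invf_gt1 (rho_gt0 x0)).
by rewrite mulr_ge0 // ln_ge0 // (invf_ge1 (rho_gt0 x)).
Qed.

Lemma decomposes_linear_segment : decomposes p -> linear_segment_beta1 p.
Proof.
move=> [k [f [g [k2 [fsurj [_ fg]]]]]].
have e := block_encoderP f; have IYT_H := IYT_block fg.
set H := IXT p (block_encoder f) in IYT_H *; have H_gt0 : 0 < H := IXT_block_gt0 k2 fsurj.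
have curve_id ix : 0 <= ix <= H -> IB_curve p ix = ix.
  move=> /andP[ix0 ixH]; apply/eqP; rewrite eq_le IB_curve_le //= IB_curve_ge //.
  have l01 : 0 <= ix / H <= 1 by rewrite divr_ge0 ?(ltW H_gt0) //= ler_pdivrMr // mul1r.
  exists (option 'I_k), (erasure (ix / H) (block_encoder f)).
  rewrite IXT_erasure // IYT_erasure // IYT_H divfK ?gt_eqF //.
  by split; first exact: erasure_encoder.
exists 0, H; split=> //; split=> // ix hix.
by rewrite !curve_id ?lexx ?(ltW H_gt0) // add0r subr0.
Qed.

Lemma linear_segment_decomposes : linear_segment_beta1 p -> decomposes p.
Proof.
move=> [a [b [a0 [ab seg]]]]; apply: contrapT => nd.
have [eta [eta0 [eta1 sdpi]]] := strong_dpi nd.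
have b0 : 0 < b := le_lt_trans a0 ab.
have curve_b : IB_curve p b <= eta * b.
  apply: ge_sup; first by exists 0; exact: IB_values0 (ltW b0).
  by move=> _ [T [q [e [le_b ->]]]]; apply: le_trans (sdpi T q e) _; rewrite ler_wpM2l.
have seg_b : IB_curve p b = IB_curve p a + (b - a) by apply: seg; rewrite lexx ltW.
have ratio := IB_curve_ratio_le a0 ab; rewrite seg_b in ratio.
have curve_a : a <= IB_curve p a.
  have : (b - a) * a <= (b - a) * IB_curve p a by nra.
  by rewrite ler_pM2l // subr_gt0.
have : b <= eta * b by apply: le_trans curve_b; rewrite seg_b; lra.
nra.
Qed.

End Channel.
End InformationBottleneck.

Theorem theorem3 (R : realType) (X Y : finType) (p : X -> Y -> R) :
  (forall x y, 0 <= p x y) ->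
  \sum_(x : X) \sum_(y : Y) p x y = 1 ->
  (forall x, 0 < pX p x) ->
  (linear_segment_beta1 p <-> decomposes p).
Proof.
move=> p_ge0 p_sum1 pX_gt0; split.
- exact: linear_segment_decomposes p_ge0 p_sum1 pX_gt0.
- exact: decomposes_linear_segment p_ge0 p_sum1 pX_gt0.
Qed.
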